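(* Let $X$ and $Y$ be finite $T_0$-spaces. (1) If $X$ and $Y$ are minimal finite spaces and $X$ is homotopy equivalent to $Y$, then $\det(X_M)=\det(Y_M)$. (2) If $X$ is homotopy equivalent to $Y$, then $|\det(X_M)|=|\det(Y_M)|$. (3) If $X$ is contractible, then $\det(X_M)=0$.
   Context: A finite $T_0$-space is identified with a finite poset via $x\le y$ iff $U_x\subseteq U_y$, where $U_x$ is the minimal open set containing $x$. For a labelling $X=\{x_1,\dots,x_n\}$, $X_M=(x_{i,j})$ is the $n\times n$ matrix with $x_{i,j}=0$ if $x_i\le x_j$ and $x_{i,j}=1$ otherwise; its determinant does not depend on the labelling. A point $x$ is a beat point if $\{y:y<x\}$ has a maximum or $\{y:y>x\}$ has a minimum. A minimal finite space is a finite $T_0$-space with no beat points. Homotopy equivalence and contractibility are in the usual topological sense. *)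

From HB Require Import structures.
From mathcomp Require Import all_boot all_order all_algebra.
From mathcomp Require Import all_classical all_reals.
From mathcomp Require Import topology separation_axioms.
From mathcomp Require Import Rstruct Rstruct_topology.
From Stdlib Require Import Rdefinitions.

Set Implicit Arguments.
Unset Strict Implicit.
Unset Printing Implicit Defensive.
Import Order.TTheory GRing.Theory Num.Theory.
Local Open Scope classical_set_scope.
Local Open Scope ring_scope.

Definition RR : realType := Rdefinitions.R.

Section FiniteSpaces.
Variable X : topologicalType.

(* A labelling of X by 'I_n (in particular X is finite with n points). *)
Definition labelling (n : nat) (f : 'I_n -> X) := bijective f.

Definition finite_T0 (n : nat) (f : 'I_n -> X) :=
  labelling f /\ kolmogorov_space X.

Definition minU (x : X) : set X := \bigcap_(U in [set U | open U /\ U x]) U.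

Definition fle (x y : X) : Prop := minU x `<=` minU y.
Definition flt (x y : X) : Prop := fle x y /\ x <> y.

Definition beat_point (x : X) : Prop :=
  (exists m, flt m x /\ forall y, flt y x -> fle y m) \/
  (exists m, flt x m /\ forall y, flt x y -> fle m y).

Definition minimal_finite_space (n : nat) (f : 'I_n -> X) :=
  finite_T0 f /\ forall x : X, ~ beat_point x.

Definition XM (n : nat) (f : 'I_n -> X) : 'M[int]_n :=
  \matrix_(i < n, j < n) (if `[< fle (f i) (f j) >] then 0 else 1).
End FiniteSpaces.

Definition homotopic (X Y : topologicalType) (f g : X -> Y) : Prop :=
  exists H : X * RR -> Y,
    {within [set p : X * RR | (0 <= p.2 <= 1)%R], continuous H} /\
    (forall x, H (x, 0%R) = f x) /\ (forall x, H (x, 1%R) = g x).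

Definition homotopy_equivalent (X Y : topologicalType) : Prop :=
  exists (f : X -> Y) (g : Y -> X),
    continuous f /\ continuous g /\
    homotopic (g \o f) idfun /\ homotopic (f \o g) idfun.

Definition contractible (X : topologicalType) : Prop :=
  exists x0 : X, homotopic idfun (fun _ : X => x0).

From HB Require Import structures.
From mathcomp Require Import all_boot all_order all_algebra.
From mathcomp Require Import all_classical all_reals.
From mathcomp Require Import topology separation_axioms normedtype.
From mathcomp Require Import Rstruct Rstruct_topology.
From Stdlib Require Import Rdefinitions Relation_Operators.

Set Implicit Arguments.
Unset Strict Implicit.
Unset Printing Implicit Defensive.
Import Order.TTheory GRing.Theory Num.Theory.

(** A finite T0-space is a poset, continuous maps are the order-preserving
    maps, and a homotopy [H] yields a fence of pointwise comparable
    order-preserving maps: every time [t] has a neighbourhood of times [s]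
    with [H (-, s) <= H (-, t)], and [0, 1] is connected.

    If x is a beat point with witness m, then [x |-> m] is a deformation
    retraction, and the row (or column) of x in the order matrix is that of m
    minus a unit vector, so deleting x only changes the sign of the
    determinant. Deleting beat points one at a time retracts every finite
    space onto a core without beat points with the same |det|. By Stong's
    lemma a map of a beat-free space joined to the identity by a fence is the
    identity, so homotopy equivalent cores are isomorphic posets, and the core
    of a contractible space is a point, whose order matrix is zero. *)

Local Open Scope ring_scope.

Local Notation converse le := [rel x y | le y x].

(** * Order matrices *)

Lemma lift_neq n (h : 'I_n) (i : 'I_n.-1) : lift h i != h.
Proof. by rewrite eq_sym neq_lift. Qed.

Lemma det_reindex (R : comPzRingType) m n (A : 'M[R]_m) (B : 'M[R]_n) (s : 'I_m -> 'I_n) :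
  m = n -> injective s -> (forall i j, B (s i) (s j) = A i j) -> \det A = \det B.
Proof.
move=> mn; subst n => s_inj AB; pose p := perm.perm s_inj.
have -> : A = col_perm p (row_perm p B).
  by apply/matrixP => i j; rewrite !mxE !perm.permE AB.
rewrite col_permE row_permE !det_mulmx !det_perm perm.odd_permV mulrC mulrA.
by rewrite -signr_addb addbb mul1r.
Qed.

Lemma det_row_sub_delta (R : comPzRingType) n (M : 'M[R]_n.+1) i k :
  i != k -> row k M = row i M - delta_mx 0 k ->
  \det M = - \det (row' k (col' k M)).
Proof.
move=> ik Mk.
pose Mi := \matrix_j (if j == k then row i M else row j M).
pose Mk' := \matrix_j (if j == k then delta_mx 0 k else row j M) : 'M[R]_n.+1.
have same_rows (N : 'M[R]_n.+1) :
    (forall j, j != k -> row j N = row j M) -> row' k N = row' k M.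
  move=> NM; apply/matrixP => a b.
  by have /rowP/(_ b) := NM _ (lift_neq k a); rewrite !mxE.
have -> : \det M = 1 * \det Mi + (-1) * \det Mk'.
  apply: (determinant_multilinear (i0 := k)); rewrite ?rowK ?eqxx ?scale1r ?scaleN1r //.
  - by apply: same_rows => j /negbTE jk; rewrite rowK jk.
  - by apply: same_rows => j /negbTE jk; rewrite rowK jk.
have -> : \det Mi = 0.
  apply: (determinant_alternate ik) => j.
  by rewrite !mxE eqxx (negbTE ik).
rewrite mulr0 add0r mulN1r (expand_det_row _ k) (bigD1 k) //= big1 ?addr0.
  rewrite !mxE eqxx /delta_mx mxE !eqxx mul1r /cofactor addnn -signr_odd odd_double mul1r.
  congr (- \det _); apply/matrixP => a b.
  by rewrite !mxE (negbTE (lift_neq k a)) mxE.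
by move=> j /negbTE jk; rewrite !mxE eqxx /delta_mx mxE jk andbF mul0r.
Qed.

Definition ordmx (T : Type) (le : rel T) k (e : 'I_k -> T) : 'M[int]_k :=
  \matrix_(i, j) (if le (e i) (e j) then 0 else 1).

Definition order_matrix (T : finType) (le : rel T) (A : {set T}) : 'M[int]_#|A| :=
  ordmx le enum_val.

Section OrderMatrix.
Variables (T : finType) (le : rel T).

Lemma det_ordmx_enum (A : {set T}) k (e : 'I_k -> T) :
  injective e -> (forall i, e i \in A) -> k = #|A| ->
  \det (ordmx le e) = \det (order_matrix le A).
Proof.
move=> e_inj eA kA; apply: (det_reindex (s := fun i => enum_rank_in (eA i) (e i))) => //.
- by move=> i j /(congr1 enum_val); rewrite !enum_rankK_in // => /e_inj.
- by move=> i j; rewrite !mxE !enum_rankK_in.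
Qed.

Lemma det_order_matrix_converse (A : {set T}) :
  \det (order_matrix (converse le) A) = \det (order_matrix le A).
Proof. by rewrite -det_tr; congr (\det _); apply/matrixP => i j; rewrite !mxE. Qed.

Lemma det_ordmx_up_beat k (e : 'I_k.+1 -> T) i0 i :
  reflexive le -> i != i0 -> ~~ le (e i) (e i0) ->
  (forall j, j != i0 -> le (e i0) (e j) = le (e i) (e j)) ->
  \det (ordmx le e) = - \det (ordmx le (e \o lift i0)).
Proof.
move=> le_refl ii0 ei_i0 same_above; rewrite (det_row_sub_delta ii0).
  by congr (- \det _); apply/matrixP => a b; rewrite /ordmx !mxE.
apply/rowP => j; rewrite /ordmx !mxE eqxx /=.
have [-> | ji0] := eqVneq j i0; first by rewrite le_refl (negbTE ei_i0) subrr.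
by rewrite same_above // subr0.
Qed.

End OrderMatrix.

Lemma det_order_matrix_iso (T1 T2 : finType) (le1 : rel T1) (le2 : rel T2)
    (A : {set T1}) (B : {set T2}) (f : T1 -> T2) (g : T2 -> T1) :
  {homo f : x / x \in A >-> x \in B} -> {homo g : y / y \in B >-> y \in A} ->
  {in A, forall x, g (f x) = x} -> {in B, forall y, f (g y) = y} ->
  {in A &, {mono f : x y / le1 x y >-> le2 x y}} ->
  \det (order_matrix le1 A) = \det (order_matrix le2 B).
Proof.
move=> fAB gBA gf fg f_mono.
have f_inj : {in A &, injective f} by move=> x y xA yA /(congr1 g); rewrite !gf.
have fAE : f @: A = B.
  apply/setP => y; apply/imsetP/idP => [[x xA ->] | yB]; first exact: fAB.
  by exists (g y); rewrite ?fg ?gBA.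
rewrite -(@det_ordmx_enum _ le2 B _ (f \o (enum_val : 'I_#|A| -> T1))) /=.
- by congr (\det _); apply/matrixP => i j; rewrite /order_matrix /ordmx !mxE f_mono ?enum_valP.
- by move=> i j /(f_inj _ _ (enum_valP i) (enum_valP j)) /enum_val_inj.
- by move=> i; rewrite fAB ?enum_valP.
- by rewrite -fAE card_in_imset.
Qed.

Lemma det_order_matrix1 (T : finType) (le : rel T) (x : T) :
  reflexive le -> \det (order_matrix le [set x]) = 0.
Proof.
move=> le_refl; have x1 : x \in [set x] by rewrite inE.
rewrite (expand_det_row _ (enum_rank_in x1 x)) big1 // => j _.
rewrite /order_matrix /ordmx mxE enum_rankK_in //.
by have /set1P -> := enum_valP j; rewrite le_refl mul0r.
Qed.

(** * Fences *)

#[local] Arguments rst_step {A R x y}.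
#[local] Arguments rst_refl {A R x}.
#[local] Arguments rst_sym {A R x y}.
#[local] Arguments rst_trans {A R x y z}.

Lemma clos_rst_map (T U : Type) (R : T -> T -> Prop) (S : U -> U -> Prop) (F : T -> U) :
  (forall x y, R x y -> clos_refl_sym_trans U S (F x) (F y)) ->
  forall x y, clos_refl_sym_trans T R x y -> clos_refl_sym_trans U S (F x) (F y).
Proof.
move=> RS x y; elim=> [u v /RS // | u | u v _ IH | u v w _ IH1 _ IH2].
- exact: rst_refl.
- exact: rst_sym IH.
- exact: rst_trans IH1 IH2.
Qed.

Definition monotone_on (T1 T2 : Type) (le1 : rel T1) (le2 : rel T2)
    (A : {pred T1}) (B : {pred T2}) (g : T1 -> T2) :=
  {homo g : x / x \in A >-> x \in B} /\ {in A &, {homo g : x y / le1 x y >-> le2 x y}}.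

Definition map_le (T1 T2 : Type) (le1 : rel T1) (le2 : rel T2)
    (A : {pred T1}) (B : {pred T2}) (g h : T1 -> T2) :=
  [/\ monotone_on le1 le2 A B g, monotone_on le1 le2 A B h &
      {in A, forall x, le2 (g x) (h x)}].

(* For maps between finite spaces, being joined by a fence is the same as
   being homotopic; only "homotopic implies fence" is needed here. *)
Definition fence (T1 T2 : Type) (le1 : rel T1) (le2 : rel T2)
    (A : {pred T1}) (B : {pred T2}) :=
  clos_refl_sym_trans (T1 -> T2) (map_le le1 le2 A B).

Section MonotoneOn.
Variables (T1 T2 T3 : Type) (le1 : rel T1) (le2 : rel T2) (le3 : rel T3).
Implicit Types (A : {pred T1}) (B : {pred T2}) (E : {pred T3}).

Lemma monotone_on_id A A' : {subset A <= A'} -> monotone_on le1 le1 A A' id.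
Proof. by split. Qed.

Lemma monotone_on_comp A B E (g : T1 -> T2) (h : T2 -> T3) :
  monotone_on le1 le2 A B g -> monotone_on le2 le3 B E h ->
  monotone_on le1 le3 A E (h \o g).
Proof.
move=> [gAB g_mono] [hBE h_mono]; split=> [x /gAB /hBE // | x y xA yA /g_mono lexy].
by apply: h_mono; rewrite ?gAB // lexy.
Qed.

Lemma monotone_on_converse A B (g : T1 -> T2) :
  monotone_on (converse le1) (converse le2) A B g -> monotone_on le1 le2 A B g.
Proof. by case=> gAB g_mono; split=> // x y xA yA; apply: g_mono. Qed.

End MonotoneOn.

Section Fences.
Variables (T0 T1 T2 T3 : Type) (le0 : rel T0) (le1 : rel T1) (le2 : rel T2) (le3 : rel T3).
Implicit Types (D : {pred T0}) (A : {pred T1}) (B : {pred T2}) (E : {pred T3}).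

Lemma fence_comp D A B E (j : T0 -> T1) (k : T2 -> T3) (u v : T1 -> T2) :
  monotone_on le0 le1 D A j -> monotone_on le2 le3 B E k ->
  fence le1 le2 A B u v -> fence le0 le3 D E (k \o u \o j) (k \o v \o j).
Proof.
move=> j_mono k_mono; apply: (clos_rst_map (F := fun w => k \o w \o j)).
move=> {}u {}v [u_mono v_mono le_uv]; apply: rst_step; split.
- exact: monotone_on_comp (monotone_on_comp j_mono u_mono) k_mono.
- exact: monotone_on_comp (monotone_on_comp j_mono v_mono) k_mono.
- move=> x xD /=; have jxA := j_mono.1 x xD.
  by apply: k_mono.2; [exact: u_mono.1 | exact: v_mono.1 | exact: le_uv].
Qed.

Lemma fence_eq_on A B (g h : T1 -> T2) : reflexive le2 ->
  monotone_on le1 le2 A B g -> {in A, g =1 h} -> fence le1 le2 A B g h.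
Proof.
move=> le2_refl [gAB g_mono] gh; apply: rst_step; split=> //.
- by split=> [x xA | x y xA yA]; rewrite -?(gh x) -?(gh y) //; [exact: gAB | exact: g_mono].
- by move=> x xA; rewrite -gh.
Qed.

Lemma fence_ext A B (u u' v v' : T1 -> T2) :
  fence le1 le2 A B u v -> u =1 u' -> v =1 v' -> fence le1 le2 A B u' v'.
Proof. by move=> + /funext <- /funext <-. Qed.

Lemma fence_converse A B (u v : T1 -> T2) :
  fence (converse le1) (converse le2) A B u v -> fence le1 le2 A B u v.
Proof.
apply: (clos_rst_map (F := id)) => {}u {}v [u_mono v_mono le_vu].
by apply/rst_sym/rst_step; split=> //; exact: monotone_on_converse.
Qed.

End Fences.

(** * Beat points and cores *)

Definition down_beat (T : eqType) (le : rel T) (A : {pred T}) (x : T) :=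
  exists2 m, m \in A &
    [/\ m != x, le m x & {in A, forall y, y != x -> le y x -> le y m}].

Definition beat_free (T : eqType) (le : rel T) (A : {pred T}) :=
  {in A, forall x, ~ down_beat le A x /\ ~ down_beat (converse le) A x}.

Definition deformation_retraction (T : Type) (le : rel T) (A C : {pred T}) (r : T -> T) :=
  [/\ {subset C <= A}, monotone_on le le A C r, {in C, r =1 id} & fence le le A A r id].

Lemma deformation_retraction_converse (T : Type) (le : rel T) (A C : {pred T}) r :
  deformation_retraction (converse le) A C r -> deformation_retraction le A C r.
Proof.
by case=> CA r_mono r_id r_fence; split=> //;
  [exact: monotone_on_converse | exact: fence_converse].
Qed.

Lemma deformation_retraction_refl (T : Type) (le : rel T) (A : {pred T}) :
  deformation_retraction le A A id.
Proof. by split=> //; [exact: monotone_on_id | exact: rst_refl]. Qed.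

Section BeatPoints.
Variables (T : finType) (le : rel T).
Hypotheses (le_refl : reflexive le) (le_anti : antisymmetric le) (le_trans : transitive le).

(* Stong's lemma: a minimal counterexample [x] would be a down beat point,
   with [g x] the maximum of the points below it. *)
Lemma le_id_is_id (A : {pred T}) (g : T -> T) :
  {in A, forall x, ~ down_beat le A x} -> monotone_on le le A A g ->
  {in A, forall x, le (g x) x} -> {in A, g =1 id}.
Proof.
move=> no_beat [gA g_mono] g_le.
suff fixed k x : x \in A -> (#|[set y | le y x]| <= k)%nat -> g x = x.
  by move=> x xA; exact: fixed _ x xA (leqnn _).
elim: k x => [|k IHk] x xA.
  by rewrite leqn0 cards_eq0 => /eqP/setP/(_ x); rewrite !inE le_refl.
move=> card_x; apply: contra_notP (no_beat x xA) => /eqP gx_neq.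
exists (g x); first exact: gA.
split=> [//||y yA yx le_yx]; first exact: g_le.
have <- : g y = y.
  apply: IHk => //; rewrite -ltnS (leq_trans _ card_x) // proper_card //.
  apply/properP; split; first by apply/fintype.subsetP => z; rewrite !inE => /le_trans; apply.
  exists x; rewrite !inE ?le_refl //; apply: contraNN yx => le_xy.
  by apply/eqP/le_anti; rewrite le_yx.
exact: g_mono.
Qed.

Lemma down_beat_retraction (A : {set T}) x : x \in A -> down_beat le A x ->
  exists r, deformation_retraction le A (A :\ x) r.
Proof.
move=> xA [m mA [mx le_mx m_max]].
pose r y := if y == x then m else y.
have r_mono : monotone_on le le A (A :\ x) r.
  split=> [y yA | y z yA zA le_yz]; rewrite /r.
    by case: eqVneq => [_ | yx]; rewrite !inE ?mx ?yx.
  case: (eqVneq y x) => [yx | yx]; case: (eqVneq z x) => [zx | zx] //.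
  - by rewrite yx in le_yz; exact: le_trans le_mx le_yz.
  - by apply: m_max; rewrite // -zx.
exists r; split=> //.
- by move=> y /setD1P[].
- by move=> y /setD1P[/negbTE yx _]; rewrite /r yx.
- apply: rst_step; split; last by move=> y _; rewrite /r; case: eqVneq => [-> //|].
  + by case: r_mono => rA r_le; split=> // y /rA /setD1P[].
  + exact: monotone_on_id.
Qed.

Lemma det_up_beat (A : {set T}) x : x \in A -> down_beat (converse le) A x ->
  \det (order_matrix le A) = - \det (order_matrix le (A :\ x)).
Proof.
move=> xA [m mA [mx /= le_xm m_min]].
pose e (i : 'I_#|A :\ x|.+1) := if unlift ord_max i is Some j then enum_val j else x.
have e_max : e ord_max = x by rewrite /e unlift_none.
have e_lift j : e (lift ord_max j) = enum_val j by rewrite /e liftK.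
have e_neq j : e (lift ord_max j) != x by have /setD1P[] := enum_valP j; rewrite e_lift.
have e_inj : injective e.
  move=> i1 i2; case: (unliftP ord_max i1) => [j1 ->|->];
    case: (unliftP ord_max i2) => [j2 ->|->] //; rewrite ?e_lift ?e_max.
  - by move/enum_val_inj ->.
  - by move/eqP; rewrite -e_lift (negbTE (e_neq j1)).
  - by move/esym/eqP; rewrite -e_lift (negbTE (e_neq j2)).
have eA i : e i \in A.
  by case: (unliftP ord_max i) => [j ->|->]; rewrite ?e_lift ?e_max //; case/setD1P: (enum_valP j).
have mAx : m \in A :\ x by rewrite !inE mx.
rewrite -(det_ordmx_enum le e_inj eA); last by rewrite (cardsD1 x A) xA.
have e_lift_inj : injective (e \o lift ord_max) by move=> j1 j2 /e_inj /lift_inj.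
have e_liftA j : (e \o lift ord_max) j \in A :\ x by rewrite /= e_lift enum_valP.
rewrite -(det_ordmx_enum le e_lift_inj e_liftA) //.
have e_m : e (lift ord_max (enum_rank_in mAx m)) = m by rewrite e_lift enum_rankK_in.
apply: (det_ordmx_up_beat le_refl (lift_neq ord_max (enum_rank_in mAx m))); rewrite ?e_m ?e_max //.
- by apply: contraNN mx => le_mx; apply/eqP/le_anti; rewrite le_mx.
- move=> j; case: (unliftP ord_max j) => [j' -> _ | ->]; last by rewrite eqxx.
  apply/idP/idP => [le_x | le_m]; last exact: le_trans le_m.
  by apply: m_min; rewrite ?eA ?e_neq.
Qed.

End BeatPoints.

Section Cores.
Variables (T : finType) (le : rel T).
Hypotheses (le_refl : reflexive le) (le_anti : antisymmetric le) (le_trans : transitive le).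

Let ge_refl : reflexive (converse le) := le_refl.
Let ge_trans : transitive (converse le) := rev_trans le_trans.
Let ge_anti : antisymmetric (converse le).
Proof. by move=> x y; rewrite andbC; exact: le_anti. Qed.

Lemma fence_id_is_id (A : {pred T}) (g : T -> T) :
  beat_free le A -> fence le le A A g id -> {in A, g =1 id}.
Proof.
move=> free.
have step u v : map_le le le A A u v -> {in A, u =1 id} <-> {in A, v =1 id}.
  case=> u_mono v_mono le_uv; split=> [u_id | v_id].
  - apply: (le_id_is_id ge_refl ge_anti ge_trans) => [x /free[] //||x xA /=].
      exact: (@monotone_on_converse _ _ (converse le) (converse le)).
    by rewrite -{1}(u_id x xA); exact: le_uv.
  - apply: (le_id_is_id le_refl le_anti le_trans) => [x /free[] //|//|x xA].
    by rewrite -{2}(v_id x xA); exact: le_uv.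
have invariant u v : fence le le A A u v -> {in A, u =1 id} <-> {in A, v =1 id}.
  elim=> {u v} [u v /step // | u // | u v _ IH | u v w _ IH1 _ IH2].
  - exact: iff_sym IH.
  - exact: iff_trans IH1 IH2.
by move=> /invariant ->.
Qed.

Lemma deformation_retraction_comp (A B C : {pred T}) (r1 r2 : T -> T) :
  deformation_retraction le A B r1 -> deformation_retraction le B C r2 ->
  deformation_retraction le A C (r2 \o r1).
Proof.
move=> [BA r1_mono r1_id r1_fence] [CB r2_mono r2_id r2_fence]; split.
- by move=> x /CB /BA.
- exact: monotone_on_comp r1_mono r2_mono.
- by move=> x xC /=; rewrite r1_id ?r2_id ?CB.
- apply: rst_trans r1_fence.
  exact: fence_comp r1_mono (monotone_on_id _ BA) r2_fence.
Qed.

Lemma beat_point_removal (A : {set T}) x :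
  x \in A -> down_beat le A x \/ down_beat (converse le) A x ->
  exists2 r, deformation_retraction le A (A :\ x) r &
    `|\det (order_matrix le A)| = `|\det (order_matrix le (A :\ x))|.
Proof.
move=> xA [down | up].
- have [r r_def] := down_beat_retraction le_refl le_trans xA down.
  exists r => //; rewrite -!(det_order_matrix_converse le).
  by rewrite (det_up_beat ge_refl ge_anti ge_trans xA down) normrN.
- have [r r_def] := down_beat_retraction ge_refl ge_trans xA up.
  exists r; first exact: deformation_retraction_converse.
  by rewrite (det_up_beat le_refl le_anti le_trans xA up) normrN.
Qed.

Lemma core_exists (A : {set T}) : exists C : {set T}, exists r,
  [/\ deformation_retraction le A C r,
      `|\det (order_matrix le A)| = `|\det (order_matrix le C)| & beat_free le C].
Proof.
have [k] := ubnP #|A|; elim: k A => // k IHk A cardA.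
have [[x xA beat] | free] :=
  pselect (exists2 x, x \in A & down_beat le A x \/ down_beat (converse le) A x).
- have [r1 r1_def det_r1] := beat_point_removal xA beat.
  have [|C [r2 [r2_def det_r2 C_free]]] := IHk (A :\ x).
    by rewrite (cardsD1 x A) xA in cardA.
  exists C, (r2 \o r1); split=> //; last by rewrite det_r1.
  exact: deformation_retraction_comp r1_def r2_def.
- exists A, id; split=> //; first exact: deformation_retraction_refl.
  by move=> x xA; split=> beat; apply: free; exists x => //; [left | right].
Qed.

End Cores.

Definition fence_equivalence (T1 T2 : finType) (le1 : rel T1) (le2 : rel T2)
    (f : T1 -> T2) (g : T2 -> T1) :=
  [/\ monotone_on le1 le2 [set: T1] [set: T2] f, monotone_on le2 le1 [set: T2] [set: T1] g,
      fence le1 le1 [set: T1] [set: T1] (g \o f) id &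
      fence le2 le2 [set: T2] [set: T2] (f \o g) id].

Section CoreRoundTrip.
Variables (T1 T2 : finType) (le1 : rel T1) (le2 : rel T2).
Hypotheses (le1_refl : reflexive le1) (le1_anti : antisymmetric le1)
  (le1_trans : transitive le1).
Variables (f : T1 -> T2) (g : T2 -> T1) (C : {set T1}) (D : {set T2}).
Variables (rC : T1 -> T1) (rD : T2 -> T2).
Hypotheses (f_mono : monotone_on le1 le2 [set: T1] [set: T2] f)
  (g_mono : monotone_on le2 le1 [set: T2] [set: T1] g)
  (gf_fence : fence le1 le1 [set: T1] [set: T1] (g \o f) id)
  (rC_def : deformation_retraction le1 [set: T1] C rC)
  (rD_def : deformation_retraction le2 [set: T2] D rD)
  (C_free : beat_free le1 C).

Lemma core_round_trip : {in C, forall x, rC (g (rD (f x))) = x}.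
Proof.
have [_ rC_mono rC_id _] := rC_def; have [_ _ _ rD_fence] := rD_def.
have C_T1 : monotone_on le1 le1 C [set: T1] id by apply: monotone_on_id => x; rewrite inE.
apply: (fence_id_is_id le1_refl le1_anti le1_trans C_free).
have fence_gf : fence le1 le1 C C (rC \o g \o rD \o f) (rC \o g \o f).
  apply: (fence_comp (monotone_on_comp C_T1 f_mono) _ rD_fence).
  exact: monotone_on_comp g_mono rC_mono.
have fence_rC : fence le1 le1 C C (rC \o g \o f) rC.
  exact: fence_comp C_T1 rC_mono gf_fence.
have fence_id : fence le1 le1 C C rC id.
  exact: fence_eq_on le1_refl (monotone_on_comp C_T1 rC_mono) rC_id.
exact: rst_trans fence_gf (rst_trans fence_rC fence_id).
Qed.

End CoreRoundTrip.

Section CoreComparison.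
Variables (T1 T2 : finType) (le1 : rel T1) (le2 : rel T2).
Hypotheses (le1_refl : reflexive le1) (le1_anti : antisymmetric le1)
  (le1_trans : transitive le1).
Hypotheses (le2_refl : reflexive le2) (le2_anti : antisymmetric le2)
  (le2_trans : transitive le2).

Lemma det_core_eq f g (C : {set T1}) (D : {set T2}) rC rD :
  fence_equivalence le1 le2 f g ->
  deformation_retraction le1 [set: T1] C rC -> deformation_retraction le2 [set: T2] D rD ->
  beat_free le1 C -> beat_free le2 D ->
  \det (order_matrix le1 C) = \det (order_matrix le2 D).
Proof.
move=> [f_mono g_mono gf_fence fg_fence] rC_def rD_def C_free D_free.
have [_ [rCC rC_mono] _ _] := rC_def; have [_ [rDD rD_mono] _ _] := rD_def.
have roundC := core_round_trip le1_refl le1_anti le1_trans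
  f_mono g_mono gf_fence rC_def rD_def C_free.
have roundD := core_round_trip le2_refl le2_anti le2_trans
  g_mono f_mono fg_fence rD_def rC_def D_free.
apply: (det_order_matrix_iso (f := rD \o f) (g := rC \o g)) => //.
- by move=> x _; apply: rDD; rewrite inE.
- by move=> y _; apply: rCC; rewrite inE.
move=> x y xC yC /=; apply/idP/idP => [le_fxy | le_xy].
- rewrite -(roundC x xC) -(roundC y yC).
  by apply: rC_mono; rewrite ?inE //; apply: g_mono.2; rewrite ?inE.
- by apply: rD_mono; rewrite ?inE //; apply: f_mono.2; rewrite ?inE.
Qed.

Lemma norm_det_fence_equivalence f g : fence_equivalence le1 le2 f g ->
  `|\det (order_matrix le1 [set: T1])| = `|\det (order_matrix le2 [set: T2])|.
Proof.
move=> fg; have [C [rC [rC_def -> C_free]]] := core_exists le1_refl le1_anti le1_trans [set: T1].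
have [D [rD [rD_def -> D_free]]] := core_exists le2_refl le2_anti le2_trans [set: T2].
by rewrite (det_core_eq fg rC_def rD_def).
Qed.

Lemma det_fence_equivalence f g : fence_equivalence le1 le2 f g ->
  beat_free le1 [set: T1] -> beat_free le2 [set: T2] ->
  \det (order_matrix le1 [set: T1]) = \det (order_matrix le2 [set: T2]).
Proof. by move=> fg; apply: det_core_eq fg _ _; exact: deformation_retraction_refl. Qed.

End CoreComparison.

Lemma det_contractible (T : finType) (le : rel T) (c : T) :
  reflexive le -> antisymmetric le -> transitive le ->
  fence le le [set: T] [set: T] (fun=> c) id -> \det (order_matrix le [set: T]) = 0.
Proof.
move=> le_refl le_anti le_trans c_fence.
have [C [r [[_ r_mono r_id _] det_r C_free]]] := core_exists le_refl le_anti le_trans [set: T].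
have C_T : monotone_on le le C [set: T] id by apply: monotone_on_id => x; rewrite inE.
have const_id : {in C, (fun=> r c) =1 id}.
  apply: (fence_id_is_id le_refl le_anti le_trans C_free).
  apply: rst_trans (fence_comp C_T r_mono c_fence) _.
  exact: fence_eq_on le_refl (monotone_on_comp C_T r_mono) r_id.
have C1 : C = [set r c].
  apply/setP => y; rewrite inE; apply/idP/eqP => [/const_id <- // | ->].
  by apply: r_mono.1; rewrite inE.
by apply/eqP; rewrite -normr_eq0 det_r C1 det_order_matrix1 ?normr0.
Qed.

Section Relabelling.
Variables (T : Type) (le : rel T) (S : finType) (e : S -> T).

Lemma monotone_on_relpre : monotone_on (relpre e le) le [set: S] predT e.
Proof. by split. Qed.

Lemma monotone_on_relpre_cancel (d : T -> S) :
  cancel d e -> monotone_on le (relpre e le) predT [set: S] d.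
Proof. by move=> dK; split=> [x _ | x y _ _]; rewrite ?inE //= !dK. Qed.

End Relabelling.

Lemma fence_relpre (X Y : Type) (leX : rel X) (leY : rel Y) (S1 S2 : finType)
    (eX : S1 -> X) (eY : S2 -> Y) (dY : Y -> S2) (u v : X -> Y) :
  cancel dY eY -> fence leX leY predT predT u v ->
  fence (relpre eX leX) (relpre eY leY) [set: S1] [set: S2] (dY \o u \o eX) (dY \o v \o eX).
Proof.
move=> dYK; apply: fence_comp; [exact: monotone_on_relpre | exact: monotone_on_relpre_cancel].
Qed.

(** * Finite spaces as posets *)

Local Open Scope classical_set_scope.

Lemma connected_locally_related (T : topologicalType) (C : set T) (E : T -> T -> Prop) :
  connected C -> (forall x y z, E x y -> E y z -> E x z) -> (forall x y, E x y -> E y x) ->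
  (forall y, C y -> \forall z \near y, C z -> E y z) ->
  forall x y, C x -> C y -> E x y.
Proof.
move=> C_conn E_trans E_sym E_loc x y Cx Cy.
pose Ex := [set z | C z /\ E x z]; pose NEx := [set z | C z /\ ~ E x z].
have sep : separated Ex NEx.
  split; rewrite -subset0.
  - move=> z [z_cl [Cz not_xz]]; have [w [[Cw xw] zw]] := z_cl _ (E_loc z Cz).
    by apply/not_xz/(E_trans _ w) => //; apply/E_sym/zw.
  - move=> z [[Cz xz] z_cl]; have [w [[Cw not_xw] zw]] := z_cl _ (E_loc z Cz).
    by apply/not_xw/(E_trans _ z) => //; apply: zw.
have C_cover : C `<=` Ex `|` NEx.
  by move=> z Cz; have [xz | not_xz] := pselect (E x z); [left | right].
have [CEx | CNEx] := connected_subset sep C_cover C_conn; first by have [] := CEx y Cy.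
by have [_ []] := CNEx x Cx; exact: nbhs_singleton (E_loc x Cx) Cx.
Qed.

Section SpecializationOrder.
Variable X : topologicalType.
Implicit Types x y z : X.

Definition fleb : rel X := fun x y => `[< fle x y >].

Lemma flebP x y : reflect (fle x y) (fleb x y).
Proof. exact: asboolP. Qed.

Lemma minU_nbhsP x y : minU y x <-> forall W, nbhs y W -> W x.
Proof.
split=> [xUy W | inW U [oU Uy]]; last exact: inW _ (open_nbhs_nbhs (conj oU Uy)).
by rewrite nbhsE => -[U [oU Uy] UW]; apply: UW; apply: xUy.
Qed.

Lemma fle_minU x y : fle x y <-> minU y x.
Proof.
split=> [le_xy | xUy z zUx U [oU Uy]]; first by apply: le_xy => U [].
by apply: zUx; split=> //; exact: xUy.
Qed.

Lemma fle_nbhsP x y : fle x y <-> forall W, nbhs y W -> W x.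
Proof. exact: iff_trans (fle_minU x y) (minU_nbhsP x y). Qed.

Lemma fleb_refl : reflexive fleb.
Proof. by move=> x; apply/flebP. Qed.

Lemma fleb_trans : transitive fleb.
Proof. by move=> y x z /flebP le_xy /flebP le_yz; apply/flebP => w /le_xy /le_yz. Qed.

Lemma fleb_anti : kolmogorov_space X -> antisymmetric fleb.
Proof.
move=> T0 x y /andP[/flebP/fle_nbhsP le_xy /flebP/fle_nbhsP le_yx].
apply/eqP/negP => /negP/T0 [W [[] | []]]; rewrite !inE => W_nbhs notW.
- exact: notW (le_yx _ W_nbhs).
- exact: notW (le_xy _ W_nbhs).
Qed.

Lemma nbhs_minU n (e : 'I_n -> X) x : labelling e -> nbhs x (minU x).
Proof.
move=> [d eK dK].
have near_i i : \forall z \near x, minU x (e i) \/ z <> e i.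
  have [xUi | /minU_nbhsP] := pselect (minU x (e i)); first by apply: nearW => z; left.
  move=> /existsNP [W /not_implyP [xW notWi]].
  by apply: filterS xW => z Wz; right => zi; apply: notWi; rewrite -zi.
apply: filterS (filter_forall _ near_i) => z /(_ (d z)); rewrite dK.
by case=> // /(_ erefl).
Qed.

End SpecializationOrder.

Lemma homotopic_unit_interval (X Y : topologicalType) (h0 h1 : X -> Y) :
  homotopic h0 h1 -> exists H : X * RR -> Y,
    [/\ {within [set p : X * RR | 0 <= p.2 <= 1], continuous H},
        forall x, H (x, 0) = h0 x & forall x, H (x, 1) = h1 x].
Proof.
case=> H [H_cont [H0 H1]]; exists H; split=> //.
suff -> : [set p : X * RR | 0 <= p.2 <= 1] = [set p | Rle 0 p.2 /\ Rle p.2 1] by [].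
apply/funext => p; apply/propext.
by split=> [/andP[/RleP ? /RleP ?] | [/RleP ? /RleP ?]]; [split | apply/andP; split].
Qed.

Section Homotopy.
Variables (X Y : topologicalType) (H : X * RR -> Y).
Hypothesis H_cont : {within [set p : X * RR | 0 <= p.2 <= 1], continuous H}.

Lemma nbhs_homotopy x t (W : set Y) : 0 <= t <= 1 -> nbhs (H (x, t)) W ->
  nbhs (x, t) [set p | 0 <= p.2 <= 1 -> W (H p)].
Proof. by move=> t01; exact: (subspace_continuousP _ _).1 H_cont (x, t) t01 W. Qed.

Lemma homotopy_fle t x y : 0 <= t <= 1 -> fle x y -> fle (H (x, t)) (H (y, t)).
Proof.
move=> t01 /fle_nbhsP le_xy; apply/fle_nbhsP => W /(nbhs_homotopy t01).
move=> [[A B] /= [yA tB] AB]; apply: (AB (x, t)) => //.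
by split; [exact: le_xy | exact: nbhs_singleton].
Qed.

Lemma homotopy_locally_below n m (eX : 'I_n -> X) (eY : 'I_m -> Y) (t : RR) :
  labelling eX -> labelling eY -> 0 <= t <= 1 ->
  \forall s \near t, 0 <= s <= 1 -> forall x, fle (H (x, s)) (H (x, t)).
Proof.
move=> [dX eXK dXK] labY t01.
have near_i i : \forall s \near t, 0 <= s <= 1 -> fle (H (eX i, s)) (H (eX i, t)).
  have [[A B] /= [xA tB] AB] := nbhs_homotopy t01 (nbhs_minU (H (eX i, t)) labY).
  apply: filterS tB => s Bs s01; apply/fle_minU; apply: (AB (eX i, s)) => //.
  by split=> //; exact: nbhs_singleton.
apply: filterS (filter_forall _ near_i) => s below s01 x.
by rewrite -(dXK x); exact: below.
Qed.

End Homotopy.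

Lemma homotopic_fence (X Y : topologicalType) n m (eX : 'I_n -> X) (eY : 'I_m -> Y)
    (h0 h1 : X -> Y) :
  labelling eX -> labelling eY -> homotopic h0 h1 ->
  fence (@fleb X) (@fleb Y) predT predT h0 h1.
Proof.
move=> labX labY /homotopic_unit_interval [H [H_cont H0 H1]].
pose slice s x := H (x, s).
have slice_mono s : 0 <= s <= 1 -> monotone_on (@fleb X) (@fleb Y) predT predT (slice s).
  move=> s01; split=> [// | x y _ _ /flebP le_xy].
  by apply/flebP; have := homotopy_fle H_cont s01 le_xy.
have -> : h0 = slice 0 by apply/funext => x; rewrite /slice H0.
have -> : h1 = slice 1 by apply/funext => x; rewrite /slice H1.
have itv01 (s : RR) : `[0, 1]%classic s = (0 <= s <= 1) by rewrite /= in_itv.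
apply: (connected_locally_related
  (E := fun s t => fence (@fleb X) (@fleb Y) predT predT (slice s) (slice t))
  (@segment_connected RR 0 1)); rewrite ?itv01 ?lexx ?ler01 //.
- by move=> s1 s2 s3; exact: rst_trans.
- by move=> s1 s2; exact: rst_sym.
move=> t; rewrite itv01 => t01.
apply: filterS (homotopy_locally_below H_cont labX labY t01) => s below.
rewrite itv01 => s01; apply/rst_sym/rst_step.
split; [exact: slice_mono s01 | exact: slice_mono t01 | move=> x _].
by apply/flebP; exact: below s01 x.
Qed.

Lemma continuous_monotone (X Y : topologicalType) (f : X -> Y) :
  continuous f -> monotone_on (@fleb X) (@fleb Y) predT predT f.
Proof.
move=> f_cont; split=> [// | x y _ _ /flebP /fle_nbhsP le_xy].
by apply/flebP/fle_nbhsP => W /f_cont /le_xy.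
Qed.

Local Close Scope classical_set_scope.

Section LabelledSpace.
Variables (X : topologicalType) (n : nat) (e : 'I_n -> X).

Lemma relpre_fleb_porder : finite_T0 e ->
  [/\ reflexive (relpre e (@fleb X)), antisymmetric (relpre e (@fleb X))
    & transitive (relpre e (@fleb X))].
Proof.
move=> [[d eK _] T0]; split=> [i | i j | j i k]; rewrite /= ?fleb_refl //.
  by move/(fleb_anti T0)/(can_inj eK).
exact: fleb_trans.
Qed.

Lemma det_XM : \det (XM e) = \det (order_matrix (relpre e (@fleb X)) [set: 'I_n]).
Proof. by apply: (@det_ordmx_enum _ _ _ _ id) => //; rewrite cardsT card_ord. Qed.

Lemma down_beat_relpre (le : rel X) i : labelling e ->
  down_beat (relpre e le) [set: 'I_n] i ->
  exists m, (le m (e i) /\ m <> e i) /\ forall y, le y (e i) /\ y <> e i -> le y m.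
Proof.
move=> [d eK dK] [j _ [ji le_ji j_max]]; exists (e j); split.
  by split=> // /(can_inj eK) ji'; rewrite ji' eqxx in ji.
move=> y [le_y y_neq]; rewrite -(dK y); apply: j_max; rewrite ?inE /= ?dK //.
by apply/eqP => dyi; apply: y_neq; rewrite -dyi dK.
Qed.

Lemma minimal_beat_free : minimal_finite_space e -> beat_free (relpre e (@fleb X)) [set: 'I_n].
Proof.
move=> [[labX _] no_beat] i _; split=> [down | up]; apply: (no_beat (e i)).
- have [m [[le_m m_neq] m_max]] := down_beat_relpre labX down.
  left; exists m; split; first by split=> //; exact/flebP.
  by move=> y [/flebP le_y y_neq]; apply/flebP/m_max.
- have [m [[le_m m_neq] m_max]] := @down_beat_relpre (converse (@fleb X)) i labX up.
  right; exists m; split; first by split; [exact/flebP | exact/nesym].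
  by move=> y [/flebP le_y y_neq]; apply/flebP/m_max; split=> //; exact/nesym.
Qed.

End LabelledSpace.

Lemma homotopy_equivalent_fence_equivalence (X Y : topologicalType) n m
    (eX : 'I_n -> X) (eY : 'I_m -> Y) :
  labelling eX -> labelling eY -> homotopy_equivalent X Y ->
  exists f g, fence_equivalence (relpre eX (@fleb X)) (relpre eY (@fleb Y)) f g.
Proof.
move=> labX labY [f [g [f_cont [g_cont [gf fg]]]]].
have [dX eXK dXK] := labX; have [dY eYK dYK] := labY.
exists (dY \o f \o eX), (dX \o g \o eY); split.
- exact: monotone_on_comp (monotone_on_comp (monotone_on_relpre _ _)
    (continuous_monotone f_cont)) (monotone_on_relpre_cancel _ dYK).
- exact: monotone_on_comp (monotone_on_comp (monotone_on_relpre _ _)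
    (continuous_monotone g_cont)) (monotone_on_relpre_cancel _ dXK).
- move/fence_ext: (fence_relpre eX dXK (homotopic_fence labX labX gf)); apply=> i /=.
    by rewrite dYK.
  by rewrite eXK.
- move/fence_ext: (fence_relpre eY dYK (homotopic_fence labY labY fg)); apply=> i /=.
    by rewrite dXK.
  by rewrite eYK.
Qed.

Lemma contractible_fence (X : topologicalType) n (e : 'I_n -> X) :
  labelling e -> contractible X ->
  exists c, fence (relpre e (@fleb X)) (relpre e (@fleb X)) [set: 'I_n] [set: 'I_n] (fun=> c) id.
Proof.
move=> lab [x0 id_x0]; have [d eK dK] := lab; exists (d x0); apply: rst_sym.
move/fence_ext: (fence_relpre e dK (homotopic_fence lab lab id_x0)).
by apply=> i /=; rewrite ?eK.
Qed.

Theorem mainTheorem4 :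
  (forall (X Y : topologicalType) (n m : nat) (fX : 'I_n -> X) (fY : 'I_m -> Y),
      minimal_finite_space fX -> minimal_finite_space fY ->
      homotopy_equivalent X Y ->
      \det (XM fX) = \det (XM fY)) /\
  (forall (X Y : topologicalType) (n m : nat) (fX : 'I_n -> X) (fY : 'I_m -> Y),
      finite_T0 fX -> finite_T0 fY ->
      homotopy_equivalent X Y ->
      `|\det (XM fX)| = `|\det (XM fY)|) /\
  (forall (X : topologicalType) (n : nat) (fX : 'I_n -> X),
      finite_T0 fX -> contractible X ->
      \det (XM fX) = 0).
Proof.
split; [|split].
- move=> X Y n m fX fY minX minY XY.
  have [[T0X _] [T0Y _]] := (minX, minY).
  have [f [g fg]] := homotopy_equivalent_fence_equivalence T0X.1 T0Y.1 XY.
  have [rX aX tX] := relpre_fleb_porder T0X; have [rY aY tY] := relpre_fleb_porder T0Y.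
  rewrite (det_XM fX) (det_XM fY).
  by apply: (det_fence_equivalence rX aX tX rY aY tY fg); exact: minimal_beat_free.
- move=> X Y n m fX fY T0X T0Y XY.
  have [f [g fg]] := homotopy_equivalent_fence_equivalence T0X.1 T0Y.1 XY.
  have [rX aX tX] := relpre_fleb_porder T0X; have [rY aY tY] := relpre_fleb_porder T0Y.
  by rewrite (det_XM fX) (det_XM fY) (norm_det_fence_equivalence rX aX tX rY aY tY fg).
- move=> X n fX T0X /(contractible_fence T0X.1) [c c_fence].
  have [rX aX tX] := relpre_fleb_porder T0X.
  by rewrite det_XM (det_contractible rX aX tX c_fence).
Qed.
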